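(* Let $\mathfrak{q}_0$ be the space form vector of the Euclidean plane (the vector representing the point $\infty$), and let $G=(g^{(1)},g^{(2)},\dots)$ be a planar circular net of $(M)$-type, consecutive curves forming Ribaucour pairs of $(\mathfrak{m}^{(j,j+1)})$-type. Then lifted-foldings of $G$ (canonically embedded in 3-space) produce circular nets whose curves lie in Euclidean planes if and only if $\langle\mathfrak{m}^{(j,j+1)},\mathfrak{q}_0\rangle=0$ for all $j$.
   Context: Planar light cone model: $\mathbb{R}^{3,2}$ with form of signature $(3,2)$ (coordinates with signs $+,+,+,-,-$), light cone $\mathcal{L}$; $\mathfrak{p}=(0,0,0,0,1)$; point $(x,y)\leftrightarrow(x,y,\frac12(1-x^2-y^2),\frac12(1+x^2+y^2),0)$, $\infty\leftrightarrow\mathfrak{q}_0=(0,0,1,-1,0)$; other elements of $\mathbb{P}(\mathcal{L})$ are oriented circles and lines (lines are those orthogonal to $\mathfrak{q}_0$); incidence = orthogonality. Inversion in $\mathfrak{a}$: $\sigma_a(x)=x-\frac{2\langle x,\mathfrak{a}\rangle}{\langle\mathfrak{a},\mathfrak{a}\rangle}\mathfrak{a}$. Ribaucour pair of curves: quadrilaterals $f_i,f_j,g_j,g_i$ concircular; R-evolution map: M-inversions in $\mathfrak{f}_i-\mathfrak{f}_j=\mathfrak{g}_i-\mathfrak{g}_j$ for suitable representatives; $(\mathfrak{m})$-type if $\mathrm{span}\{\mathfrak{m},\mathfrak{p}\}$ is 2-dimensional and fixed by all these inversions. A planar circular net of $(M)$-type is a sequence of planar curves with consecutive pairs of $(\mathfrak{m}^{(j,j+1)})$-type.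 Canonical embedding $\iota:\mathbb{R}^{3,2}\to\mathbb{R}^{4,2}$, $(x_1,\dots,x_5)\mapsto(x_1,x_2,0,x_3,x_4,x_5)$, places the net in the $xy$-plane of $\mathbb{R}^3$ (circles become spheres orthogonal to that plane). Lifted-folding of such a net: successively applying to the curves (composed) M-inversions in complexes $\mathfrak{n}=\mathfrak{m}^1+\tilde\lambda\mathfrak{m}^2+\langle\mathfrak{m}^1+\tilde\lambda\mathfrak{m}^2,\mathfrak{p}\rangle\mathfrak{p}$, $\tilde\lambda\in\mathbb{R}$, where $\mathfrak{m}^1$ represents the plane and $\mathfrak{m}^2=\iota(\mathfrak{m}^{(j,j+1)})$ (transported by previously applied inversions); the result is a circular net whose curves lie on spheres. *)

From HB Require Import structures.
From mathcomp Require Import all_boot all_order all_algebra.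
Set Implicit Arguments. Unset Strict Implicit. Unset Printing Implicit Defensive.
Import Order.TTheory GRing.Theory Num.Theory.
Local Open Scope ring_scope.

Section Model.
Variable R : realFieldType.

Definition lip (n k : nat) (x y : 'rV[R]_n) : R :=
  \sum_(i < n) (if (i < k)%N then 1 else -1) * x ord0 i * y ord0 i.

Definition ip5 (x y : 'rV[R]_5) : R := lip 3 x y.
Definition ip6 (x y : 'rV[R]_6) : R := lip 4 x y.

Definition mkv (n : nat) (s : seq R) : 'rV[R]_n := \row_(i < n) s`_i.

(* point-sphere complex p and space form vector q0 (the point infinity) *)
Definition p5 : 'rV[R]_5 := mkv 5 [:: 0; 0; 0; 0; 1].
Definition q0 : 'rV[R]_5 := mkv 5 [:: 0; 0; 1; -1; 0].

Definition pt5 (x y : R) : 'rV[R]_5 :=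
  mkv 5 [:: x; y; (1 - x ^+ 2 - y ^+ 2) / 2; (1 + x ^+ 2 + y ^+ 2) / 2; 0].

Definition inversion (n k : nat) (a x : 'rV[R]_n) : 'rV[R]_n :=
  x - ((2 * lip k x a) / lip k a a) *: a.
Definition sigma5 := @inversion 5 3.
Definition sigma6 := @inversion 6 4.

(* representative of a (finite) point of the Euclidean plane:
   isotropic, incident with p (i.e. orthogonal to p), not infinity *)
Definition is_point (x : 'rV[R]_5) : Prop :=
  ip5 x x = 0 /\ ip5 x p5 = 0 /\ ip5 x q0 != 0.

Definition is_circle (c : 'rV[R]_5) : Prop := ip5 c c = 0 /\ ip5 c p5 != 0.

Definition concircular (a b c d : 'rV[R]_5) : Prop :=
  exists k, is_circle k /\ ip5 k a = 0 /\ ip5 k b = 0 /\ ip5 k c = 0 /\ ip5 k d = 0.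

Definition planar_curve (f : nat -> 'rV[R]_5) : Prop := forall i, is_point (f i).

Definition ribaucour_pair (f g : nat -> 'rV[R]_5) : Prop :=
  forall i, concircular (f i) (f i.+1) (g i.+1) (g i).

Definition r_evolution (f g : nat -> 'rV[R]_5) (a : nat -> 'rV[R]_5) : Prop :=
  forall i, ip5 (a i) (a i) != 0 /\
    exists s1 s2 t1 t2 : R, [/\ s1 != 0, s2 != 0, t1 != 0 & t2 != 0] /\
      a i = s1 *: f i - s2 *: f i.+1 /\ a i = t1 *: g i - t2 *: g i.+1.

Definition span_mp (m : 'rV[R]_5) : 'M[R]_(1 + 1, 5) := col_mx m p5.

Definition ribaucour_mtype (f g : nat -> 'rV[R]_5) (m : 'rV[R]_5) : Prop :=
  ribaucour_pair f g /\ \rank (span_mp m) = 2%N /\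
  exists a, r_evolution f g a /\
    forall i (v : 'rV[R]_5), (v <= span_mp m)%MS -> (sigma5 (a i) v <= span_mp m)%MS.

Definition planar_net_Mtype (G : nat -> nat -> 'rV[R]_5) (m : nat -> 'rV[R]_5) : Prop :=
  (forall j, planar_curve (G j)) /\ (forall j, ribaucour_mtype (G j) (G j.+1) (m j)).

Definition iota (x : 'rV[R]_5) : 'rV[R]_6 :=
  mkv 6 [:: x ord0 0; x ord0 1; 0; x ord0 2; x ord0 3; x ord0 4].

Definition p6 : 'rV[R]_6 := iota p5.
Definition q6 : 'rV[R]_6 := iota q0.

(* m^1: the (oriented) plane z = 0 of R^3 *)
Definition m1 : 'rV[R]_6 := mkv 6 [:: 0; 0; 1; 0; 0; 1].

Definition mproj (v : 'rV[R]_6) : 'rV[R]_6 := v + ip6 v p6 *: p6.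

Fixpoint fold_map (m : nat -> 'rV[R]_5) (lam : nat -> R) (j : nat) : 'rV[R]_6 -> 'rV[R]_6 :=
  match j with
  | 0 => id
  | j'.+1 =>
      let T := fold_map m lam j' in
      let n := mproj (T m1 + lam j' *: T (iota (m j'))) in
      fun x => sigma6 n (T x)
  end.

Definition fold_complex (m : nat -> 'rV[R]_5) (lam : nat -> R) (j : nat) : 'rV[R]_6 :=
  mproj (fold_map m lam j m1 + lam j *: fold_map m lam j (iota (m j))).

Definition lifted_folding_ok (m : nat -> 'rV[R]_5) (lam : nat -> R) : Prop :=
  forall j, ip6 (fold_complex m lam j) (fold_complex m lam j) != 0.

Definition lifted_curve (G : nat -> nat -> 'rV[R]_5) (m : nat -> 'rV[R]_5)
  (lam : nat -> R) (j i : nat) : 'rV[R]_6 := fold_map m lam j (iota (G j i)).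

(* the sphere on which the j-th lifted curve lies (image of the plane m^1) *)
Definition carrier_sphere (m : nat -> 'rV[R]_5) (lam : nat -> R) (j : nat) : 'rV[R]_6 :=
  fold_map m lam j m1.

(* an (oriented) sphere of R^3 is a Euclidean plane iff it contains infinity *)
Definition is_euclidean_plane (s : 'rV[R]_6) : Prop := ip6 s q6 = 0.

End Model.

(* Inversions are isometries of R^{4,2}, and every folding complex n_j is
   orthogonal to the point-sphere complex p, so the foldings fix p.  As long as
   the earlier foldings also fix infinity q, one computes
   <n_j, q> = lam_j <m_j, q0>.  Hence if all <m_j, q0> vanish, every folding
   fixes q and each carrier sphere stays orthogonal to q, like the plane m^1.
   Conversely, if <m_j, q0> <> 0, fold only at step j, with lam_j chosen so that
   n_j is not null; then
   <carrier_{j+1}, q> = -2 lam_j <m_j, q0> / <n_j, n_j> <> 0. *)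
From Pilot Require Import Defs.
From mathcomp Require Import all_boot all_order all_algebra ring.
Set Implicit Arguments. Unset Strict Implicit.
Import GRing.Theory Num.Theory.
Local Open Scope ring_scope.

Section InnerProduct.
Variables (R : realFieldType) (n k : nat).
Implicit Types (x y z a : 'rV[R]_n).

Lemma lipC x y : lip k x y = lip k y x.
Proof. by rewrite /lip; apply: eq_bigr => i _; ring. Qed.

Lemma lipDl x y z : lip k (x + y) z = lip k x z + lip k y z.
Proof. by rewrite /lip -big_split; apply: eq_bigr => i _; rewrite /= !mxE; ring. Qed.

Lemma lipZl (c : R) x z : lip k (c *: x) z = c * lip k x z.
Proof. by rewrite /lip mulr_sumr; apply: eq_bigr => i _; rewrite /= !mxE; ring. Qed.

Lemma lipBl x y z : lip k (x - y) z = lip k x z - lip k y z.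
Proof. by rewrite lipDl -scaleN1r lipZl mulN1r. Qed.

Lemma lip_inversionl a x y :
  lip k (inversion k a x) y = lip k x y - 2 * lip k x a / lip k a a * lip k a y.
Proof. by rewrite /inversion lipBl lipZl. Qed.

Lemma lip_inversion a x y :
  lip k (inversion k a x) (inversion k a y) = lip k x y.
Proof.
rewrite lip_inversionl !(lipC _ (inversion k a y)) !lip_inversionl.
rewrite (lipC y x) (lipC y a) (lipC a x).
have [->|aa_neq0] := eqVneq (lip k a a) 0; first by rewrite invr0 !mulr0 !mul0r; ring.
by field.
Qed.

Lemma inversion_id a x : lip k x a = 0 -> inversion k a x = x.
Proof. by move=> xa0; rewrite /inversion xa0 mulr0 mul0r scale0r subr0. Qed.

End InnerProduct.

Section Model.
Variable R : realFieldType.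
Implicit Types (a x y z v w : 'rV[R]_6).

Lemma ip6C x y : ip6 x y = ip6 y x.            Proof. exact: lipC. Qed.
Lemma ip6Dl x y z : ip6 (x + y) z = ip6 x z + ip6 y z. Proof. exact: lipDl. Qed.
Lemma ip6Zl c x z : ip6 (c *: x) z = c * ip6 x z.      Proof. exact: lipZl. Qed.
Lemma ip6Dr x y z : ip6 z (x + y) = ip6 z x + ip6 z y.
Proof. by rewrite ip6C ip6Dl !(ip6C z). Qed.
Lemma ip6Zr c x z : ip6 z (c *: x) = c * ip6 z x.
Proof. by rewrite ip6C ip6Zl ip6C. Qed.

Lemma ip6_sigma6l a x y :
  ip6 (sigma6 a x) y = ip6 x y - 2 * ip6 x a / ip6 a a * ip6 a y.
Proof. exact: lip_inversionl. Qed.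

Lemma ip6_sigma6 a x y : ip6 (sigma6 a x) (sigma6 a y) = ip6 x y.
Proof. exact: lip_inversion. Qed.

Lemma sigma6_id a x : ip6 x a = 0 -> sigma6 a x = x.
Proof. exact: inversion_id. Qed.

Lemma row5_mkv (x : 'rV[R]_5) :
  exists c0 c1 c2 c3 c4, x = mkv 5 [:: c0; c1; c2; c3; c4].
Proof.
exists (x ord0 0), (x ord0 1), (x ord0 2), (x ord0 3), (x ord0 4).
apply/rowP => -[[|[|[|[|[|?]]]]] lti] //; rewrite !mxE /=;
  by congr (x ord0 _); apply: val_inj.
Qed.

Ltac ip_compute := rewrite /ip6 /ip5 /lip !big_ord_recr !big_ord0 /= !mxE /=; ring.

Lemma ip6_iota (x y : 'rV[R]_5) : ip6 (Defs.iota x) (Defs.iota y) = ip5 x y.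
Proof.
have [a0 [a1 [a2 [a3 [a4 ->]]]]] := row5_mkv x.
have [b0 [b1 [b2 [b3 [b4 ->]]]]] := row5_mkv y.
ip_compute.
Qed.

Lemma ip6_iota_p6 (x : 'rV[R]_5) : ip6 (Defs.iota x) (p6 R) = ip5 x (p5 R).
Proof. exact: ip6_iota. Qed.

Lemma ip6_m1_iota (x : 'rV[R]_5) : ip6 (m1 R) (Defs.iota x) = ip5 x (p5 R).
Proof. have [a0 [a1 [a2 [a3 [a4 ->]]]]] := row5_mkv x; ip_compute. Qed.

Lemma ip6_m1_m1 : ip6 (m1 R) (m1 R) = 0.   Proof. ip_compute. Qed.
Lemma ip6_m1_p6 : ip6 (m1 R) (p6 R) = -1.  Proof. ip_compute. Qed.
Lemma ip6_m1_q6 : ip6 (m1 R) (q6 R) = 0.   Proof. ip_compute. Qed.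
Lemma ip6_p6_p6 : ip6 (p6 R) (p6 R) = -1.  Proof. ip_compute. Qed.
Lemma ip6_p6_q6 : ip6 (p6 R) (q6 R) = 0.   Proof. ip_compute. Qed.

Lemma ip6_mprojr w v : ip6 w (mproj v) = ip6 w v + ip6 v (p6 R) * ip6 w (p6 R).
Proof. by rewrite /mproj ip6Dr ip6Zr. Qed.

Lemma ip6_mproj_p6 v : ip6 (mproj v) (p6 R) = 0.
Proof. by rewrite ip6C ip6_mprojr ip6_p6_p6 ip6C; ring. Qed.

Lemma ip6_mproj_mproj v : ip6 (mproj v) (mproj v) = ip6 v v + ip6 v (p6 R) ^+ 2.
Proof. by rewrite ip6_mprojr ip6_mproj_p6 ip6C ip6_mprojr; ring. Qed.

End Model.

Section LiftedFolding.
Variables (R : realFieldType) (m : nat -> 'rV[R]_5) (lam : nat -> R).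
Implicit Types (x y : 'rV[R]_6).
Local Notation T := (fold_map m lam).
Local Notation n := (fold_complex m lam).

Lemma ip6_fold_map j x y : ip6 (T j x) (T j y) = ip6 x y.
Proof. by elim: j => [//|j IHj] /=; rewrite ip6_sigma6 IHj. Qed.

Lemma fold_map_p6 j : T j (p6 R) = p6 R.
Proof.
elim: j => [//|j IHj] /=.
by rewrite IHj sigma6_id // ip6C ip6_mproj_p6.
Qed.

Lemma ip6_fold_map_p6 j x : ip6 (T j x) (p6 R) = ip6 x (p6 R).
Proof. by rewrite -{1}(fold_map_p6 j) ip6_fold_map. Qed.

Lemma ip6_fold_complex j :
  ip6 (n j) (n j) = 1 + lam j ^+ 2 * (ip5 (m j) (p5 R) ^+ 2 + ip5 (m j) (m j)).
Proof.
rewrite /fold_complex ip6_mproj_mproj !ip6Dl !ip6Dr !ip6Zl !ip6Zr.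
rewrite !ip6_fold_map !ip6_fold_map_p6 ip6_m1_m1 ip6_m1_p6 ip6_m1_iota ip6_iota.
by rewrite (ip6C (Defs.iota _)) ip6_m1_iota ip6_iota_p6; ring.
Qed.

Lemma ip6_carrier_fold_complex j : ip6 (T j (m1 R)) (n j) = 1.
Proof.
rewrite /fold_complex ip6_mprojr !ip6Dl !ip6Dr !ip6Zl !ip6Zr.
rewrite !ip6_fold_map !ip6_fold_map_p6 ip6_m1_m1 ip6_m1_p6 ip6_m1_iota ip6_iota_p6.
by ring.
Qed.

Lemma ip6_fold_complex_q6 j :
  T j (q6 R) = q6 R -> ip6 (n j) (q6 R) = lam j * ip5 (m j) (q0 R).
Proof.
move=> Tq; rewrite ip6C /fold_complex ip6_mprojr ip6Dr ip6Zr -{1 2}Tq !ip6_fold_map.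
by rewrite !(ip6C (q6 R)) ip6_m1_q6 ip6_iota ip6_p6_q6 mulr0 add0r addr0.
Qed.

Lemma fold_map_q6 j :
  (forall k, (k < j)%N -> lam k * ip5 (m k) (q0 R) = 0) -> T j (q6 R) = q6 R.
Proof.
elim: j => [//|j IHj] orth /=.
have Tq : T j (q6 R) = q6 R by apply: IHj => k /ltnW; apply: orth.
by rewrite Tq sigma6_id // ip6C ip6_fold_complex_q6 // orth.
Qed.

Lemma ip6_carrier_sphere_succ j : T j (q6 R) = q6 R ->
  ip6 (carrier_sphere m lam j.+1) (q6 R) =
  - (2 * (lam j * ip5 (m j) (q0 R))) / ip6 (n j) (n j).
Proof.
move=> Tq; rewrite /carrier_sphere /= ip6_sigma6l.
rewrite ip6_carrier_fold_complex ip6_fold_complex_q6 // -{1}Tq ip6_fold_map ip6_m1_q6.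
by rewrite mulr1 add0r mulrAC mulNr.
Qed.

Lemma carrier_sphere_euclidean j :
  (forall k, (k < j)%N -> lam k * ip5 (m k) (q0 R) = 0) ->
  is_euclidean_plane (carrier_sphere m lam j).
Proof.
move=> orth; rewrite /is_euclidean_plane /carrier_sphere.
by rewrite -(fold_map_q6 orth) ip6_fold_map ip6_m1_q6.
Qed.

End LiftedFolding.

Lemma exists_scale_nondegenerate (F : numFieldType) (c : F) :
  exists t : F, t != 0 /\ 1 + t ^+ 2 * c != 0.
Proof.
have [c_eqN1|c_neqN1] := eqVneq c (-1); last first.
  exists 1; rewrite oner_eq0 expr1n mul1r; split=> //.
  by rewrite addrC addr_eq0.
exists 2; rewrite pnatr_eq0 c_eqN1; split=> //.
have -> : 1 + 2 ^+ 2 * -1 = - 3 :> F by ring.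
by rewrite oppr_eq0 pnatr_eq0.
Qed.

Lemma lifted_folding_not_euclidean (R : realFieldType) (m : nat -> 'rV[R]_5) j :
  ip5 (m j) (q0 R) != 0 ->
  exists2 lam, lifted_folding_ok m lam &
    ~ is_euclidean_plane (carrier_sphere m lam j.+1).
Proof.
move=> mq_neq0.
have [t [t_neq0 norm_neq0]] :=
  exists_scale_nondegenerate (ip5 (m j) (p5 R) ^+ 2 + ip5 (m j) (m j)).
pose lam k : R := if k == j then t else 0.
have orth k : (k < j)%N -> lam k * ip5 (m k) (q0 R) = 0.
  by rewrite /lam; case: eqP => [->|_]; [rewrite ltnn | rewrite mul0r].
have ok : lifted_folding_ok m lam.
  move=> k; rewrite ip6_fold_complex /lam.
  by case: ifP => [/eqP ->|_]; [exact: norm_neq0 | rewrite expr0n mul0r addr0 oner_eq0].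
exists lam => //; rewrite /is_euclidean_plane ip6_carrier_sphere_succ ?fold_map_q6 //.
rewrite ip6_fold_complex /lam eqxx; apply/eqP.
by rewrite !(mulf_eq0, invr_eq0, oppr_eq0, pnatr_eq0, negb_or) t_neq0 mq_neq0 norm_neq0.
Qed.

Theorem corollary2p11 (R : realFieldType)
    (G : nat -> nat -> 'rV[R]_5) (m : nat -> 'rV[R]_5) :
  planar_net_Mtype G m ->
  ((forall lam : nat -> R, lifted_folding_ok m lam ->
      forall j, is_euclidean_plane (carrier_sphere m lam j))
   <-> (forall j, ip5 (m j) (q0 R) = 0)).
Proof.
move=> _; split=> [planes j | orth lam _ j].
  have [//|mq_neq0] := eqVneq (ip5 (m j) (q0 R)) 0.
  have [lam ok not_plane] := lifted_folding_not_euclidean mq_neq0.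
  by case: not_plane; apply: planes.
by apply: carrier_sphere_euclidean => k _; rewrite orth mulr0.
Qed.
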